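(* Let $P=\frac{1}{\sqrt2}\begin{bmatrix}1&1\\0&0\end{bmatrix}$, $Q=\frac{1}{\sqrt2}\begin{bmatrix}0&0\\1&-1\end{bmatrix}$ and $J=\begin{bmatrix}0&-1\\1&0\end{bmatrix}$. For an initial state $\varphi\in\mathbb{C}^2$ with $\|\varphi\|=1$, define $\Psi^{(n)}_k(\varphi)\in\mathbb{C}^2$ for $n\in\mathbb{Z}_+=\{0,1,2,\dots\}$ and $k\in\mathbb{Z}$ by $\Psi^{(0)}_0(\varphi)=\varphi$, $\Psi^{(0)}_k(\varphi)=0$ for $k\neq 0$, and $\Psi^{(n+1)}_k(\varphi)=Q\Psi^{(n)}_{k-1}(\varphi)+P\Psi^{(n)}_{k+1}(\varphi)$. (i) If $\varphi=\frac{e^{i\theta}}{\sqrt2}\begin{bmatrix}1\\ i\end{bmatrix}$ with $\theta\in[0,2\pi)$, then $\Psi^{(n)}_k(\varphi)=(-1)^n\, i\, J\,\Psi^{(n)}_{-k}(\varphi)$ for all $k\in\mathbb{Z}$ and $n\in\mathbb{Z}_+$. (ii) If $\varphi=\frac{e^{i\theta}}{\sqrt2}\begin{bmatrix}1\\ -i\end{bmatrix}$ with $\theta\in[0,2\pi)$, then $\Psi^{(n)}_k(\varphi)=(-1)^n\,(-i)\, J\,\Psi^{(n)}_{-k}(\varphi)$ for all $k\in\mathbb{Z}$ and $n\in\mathbb{Z}_+$.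
   Context: This is the one-dimensional Hadamard walk: $H=\frac{1}{\sqrt2}\begin{bmatrix}1&1\\1&-1\end{bmatrix}=P+Q$, the upper (resp. lower) component of $\Psi^{(n)}_k(\varphi)$ is the amplitude of the particle at site $k$ at time $n$ with left (resp. right) chirality. The paper realizes the walk on a large cycle of $2N+1$ sites with the particle started at the middle site; for the times considered this coincides with the walk on $\mathbb{Z}$ described in the claim. *)

From HB Require Import structures.
From mathcomp Require Import all_boot all_order all_algebra.
From mathcomp Require Import complex.
From mathcomp Require Import reals trigo.
Set Implicit Arguments. Unset Strict Implicit. Unset Printing Implicit Defensive.
Import Order.TTheory GRing.Theory Num.Theory.
Local Open Scope ring_scope.
Local Open Scope complex_scope.

Section Walk.
Variable R : realType.

Definition mx2 (a b c d : R[i]) : 'M[R[i]]_2 :=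
  \matrix_(i < 2, j < 2)
    if (i : nat) == 0%N then (if (j : nat) == 0%N then a else b)
    else (if (j : nat) == 0%N then c else d).

Definition cv2 (a b : R[i]) : 'cV[R[i]]_2 :=
  \col_(i < 2) if (i : nat) == 0%N then a else b.

Definition invsqrt2 : R[i] := ((Num.sqrt (2 : R))^-1)%:C.

Definition Pmx : 'M[R[i]]_2 := invsqrt2 *: mx2 1 1 0 0.
Definition Qmx : 'M[R[i]]_2 := invsqrt2 *: mx2 0 0 1 (-1).
Definition Jmx : 'M[R[i]]_2 := mx2 0 (-1) 1 0.

Definition expi (theta : R) : R[i] := (cos theta +i* sin theta).

Fixpoint Psi (phi : 'cV[R[i]]_2) (n : nat) (k : int) : 'cV[R[i]]_2 :=
  match n with
  | 0%N => if k == 0 then phi else 0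
  | n'.+1 => Qmx *m Psi phi n' (k - 1) + Pmx *m Psi phi n' (k + 1)
  end.

End Walk.

(* J anti-intertwines the two halves of the Hadamard coin, Q J = - J P and
   P J = - J Q, so conjugating the walk by J and reflecting k |-> -k
   reproduces it up to the sign (-1)^n.  The walk is linear in the initial
   state, and (1, i) and (1, -i) are eigenvectors of J with eigenvalues -i
   and i. *)
From HB Require Import structures.
From mathcomp Require Import all_boot all_order all_algebra.
From mathcomp Require Import complex.
From mathcomp Require Import reals trigo ring.
Import Order.TTheory GRing.Theory Num.Theory.
Local Open Scope ring_scope.
Local Open Scope complex_scope.

Section HadamardWalkSymmetry.
Variable R : realType.
Implicit Types (a b c d x y s e : R[i]) (phi : 'cV[R[i]]_2).

Lemma mulmx2 a b c d a' b' c' d' :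
  mx2 a b c d *m mx2 a' b' c' d' =
  mx2 (a * a' + b * c') (a * b' + b * d') (c * a' + d * c') (c * b' + d * d').
Proof.
apply/matrixP=> i j; rewrite !mxE big_ord_recl big_ord1 !mxE.
by case: i => [[|[|i]] Hi]; case: j => [[|[|j]] Hj].
Qed.

Lemma oppmx2 a b c d : - mx2 a b c d = mx2 (- a) (- b) (- c) (- d).
Proof.
apply/matrixP=> i j; rewrite !mxE.
by case: i => [[|[|i]] Hi]; case: j => [[|[|j]] Hj].
Qed.

Lemma mulmx2_cv2 a b c d x y :
  mx2 a b c d *m cv2 x y = cv2 (a * x + b * y) (c * x + d * y).
Proof.
apply/matrixP=> i j; rewrite !mxE big_ord_recl big_ord1 !mxE.
by case: i => [[|[|i]] Hi].
Qed.

Lemma scale_cv2 e x y : e *: cv2 x y = cv2 (e * x) (e * y).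
Proof. by apply/matrixP=> i j; rewrite !mxE; case: ifP. Qed.

Lemma mulQJ : Qmx R *m Jmx R = - (Jmx R *m Pmx R).
Proof.
rewrite /Qmx /Pmx /Jmx -scalemxAl -scalemxAr -scalerN !mulmx2 oppmx2.
by congr (_ *: mx2 _ _ _ _); ring.
Qed.

Lemma mulPJ : Pmx R *m Jmx R = - (Jmx R *m Qmx R).
Proof.
rewrite /Qmx /Pmx /Jmx -scalemxAl -scalemxAr -scalerN !mulmx2 oppmx2.
by congr (_ *: mx2 _ _ _ _); ring.
Qed.

Lemma Psi_scale e phi n k : Psi (e *: phi) n k = e *: Psi phi n k.
Proof.
elim: n k => [|n IHn] k /=; first by case: eqP; rewrite ?scaler0.
by rewrite !IHn -!scalemxAr scalerDr.
Qed.

Lemma Psi_J phi n k :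
  Psi (Jmx R *m phi) n k = (-1) ^+ n *: (Jmx R *m Psi phi n (- k)).
Proof.
elim: n k => [|n IHn] k /=.
  by rewrite oppr_eq0 scale1r; case: eqP; rewrite ?mulmx0.
rewrite !IHn -!scalemxAr !mulmxA mulQJ mulPJ !mulNmx -!mulmxA.
rewrite opprB opprD addrC (addrC 1) mulmxDr exprS mulN1r scaleNr -scalerN.
by rewrite opprD scalerDr.
Qed.

Lemma Psi_Jeigen phi c n k : phi = c *: (Jmx R *m phi) ->
  Psi phi n k = ((-1) ^+ n * c) *: (Jmx R *m Psi phi n (- k)).
Proof. by move=> phiE; rewrite {1}phiE Psi_scale Psi_J scalerA mulrC. Qed.

Lemma cv2_Jeigen e s : s * s = -1 ->
  e *: cv2 1 s = s *: (Jmx R *m (e *: cv2 1 s)).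
Proof.
move=> ssN1; rewrite -scalemxAr /Jmx mulmx2_cv2 !scale_cv2.
congr cv2.
  by rewrite mul0r add0r mulN1r !mulrN mulrCA ssN1 mulrN1 opprK mulr1.
by rewrite mul1r mul0r addr0 mulr1 mulrC.
Qed.

End HadamardWalkSymmetry.

Theorem lemma1 (R : realType) (theta : R) :
  0 <= theta < 2 * pi ->
  (let phi := (expi theta * invsqrt2 R) *: cv2 1 'i in
   forall (n : nat) (k : int),
     Psi phi n k = ((-1) ^+ n * 'i) *: (Jmx R *m Psi phi n (- k))) /\
  (let phi := (expi theta * invsqrt2 R) *: cv2 1 (- 'i) in
   forall (n : nat) (k : int),
     Psi phi n k = ((-1) ^+ n * (- 'i)) *: (Jmx R *m Psi phi n (- k))).
Proof.
have iiN1 : 'i * 'i = -1 :> R[i] by rewrite -expr2 sqr_i.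
move=> _; split=> phi n k; apply: Psi_Jeigen; apply: cv2_Jeigen.
  exact: iiN1.
by rewrite mulrNN.
Qed.
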